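(* Let $\xi$ be a DoS sequence with infinitely many intervals $H_n$ that is not an edge case. Then $$\limsup_{n\to\infty}\frac{\lvert\Xi(0,h_n+\tau_n)\rvert}{h_n+\tau_n} = \inf\mathcal{D}(\xi)\quad\text{and}\quad \limsup_{n\to\infty}\frac{n}{h_n}=\inf\mathcal{F}(\xi).$$
   Context: A DoS sequence $\xi=\{H_n\}_{n\in\mathbb{N}_+}$ is a sequence of sets $H_n := \{h_n\}\cup[h_n,h_n+\tau_n)$, where $h_1\geqslant 0$, $\tau_n\geqslant 0$ and $h_{n+1} > h_n+\tau_n$ for all $n$. For $0\leqslant \tau\leqslant s$ let $\Xi(\tau,s) := \bigcup_n H_n\cap[\tau,s]$ and $n_\xi(\tau,s) := \operatorname{card}(\{h_n\}_n\cap[\tau,s])$; $\lvert\cdot\rvert$ denotes Lebesgue measure. A constant $B_d\in[0,1]$ is a duration-bound of $\xi$ if there is a constant $0<\kappa<+\infty$ with $\lvert \Xi(0,t)\rvert\leqslant \kappa + B_d t$ for all $t\geqslant 0$. A constant $B_f\in[0,+\infty)$ is a frequency-bound of $\xi$ if there is an integer $0<\Lambda<+\infty$ with $n_\xi(0,t)\leqslant \Lambda + B_f t$ for all $t\geqslant 0$; if no such finite $B_f$ exists, the frequency-bound is defined to be $+\infty$. $\mathcal{D}(\xi)$ and $\mathcal{F}(\xi)$ denote the sets of all duration-bounds and frequency-bounds of $\xi$. $\xi$ is an edge case if (i) $\inf\mathcal{D}(\xi)=1$, or (ii) $\inf\mathcal{F}(\xi)=+\infty$, or (iii) for every $\Gamma\in(0,+\infty)$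 there is $n$ with $\tau_n>\Gamma$. *)

From HB Require Import structures.
From mathcomp Require Import all_boot all_order all_algebra.
From mathcomp Require Import all_classical all_reals all_analysis.
Set Implicit Arguments. Unset Strict Implicit. Unset Printing Implicit Defensive.
Import Order.TTheory GRing.Theory Num.Theory.
Local Open Scope classical_set_scope.
Local Open Scope ring_scope.

Section DoS.
Variable R : realType.

(* A DoS sequence with infinitely many intervals, indexed from 0:
   h n, tau n stand for h_{n+1}, tau_{n+1} of the paper. *)
Definition DoS (h tau : nat -> R) : Prop :=
  0 <= h 0%N /\ (forall n, 0 <= tau n) /\ (forall n, h n + tau n < h n.+1).

Definition Hset (h tau : nat -> R) (n : nat) : set R :=
  [set h n] `|` [set x | h n <= x < h n + tau n].

Definition Xi (h tau : nat -> R) (a s : R) : set R :=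
  (\bigcup_n Hset h tau n) `&` [set x | a <= x <= s].

Definition n_xi (h : nat -> R) (a s : R) : \bar R :=
  counting ([set h n | n in [set: nat]] `&` [set x | a <= x <= s]).

Definition is_duration_bound (h tau : nat -> R) (B : R) : Prop :=
  0 <= B <= 1 /\ exists kappa : R, 0 < kappa /\
    forall t : R, 0 <= t ->
      (lebesgue_measure (Xi h tau 0 t) <= (kappa + B * t)%:E)%E.

Definition Dset (h tau : nat -> R) : set (\bar R) :=
  [set x | exists B, x = B%:E /\ is_duration_bound h tau B].

Definition is_freq_bound (h : nat -> R) (B : R) : Prop :=
  0 <= B /\ exists Lambda : nat, (0 < Lambda)%N /\
    forall t : R, 0 <= t -> (n_xi h 0 t <= (Lambda%:R + B * t)%:E)%E.

Definition Fset (h : nat -> R) : set (\bar R) :=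
  [set x | (exists B, x = B%:E /\ is_freq_bound h B) \/
           (x = +oo%E /\ ~ exists B, is_freq_bound h B)].

Definition edge_case (h tau : nat -> R) : Prop :=
  ereal_inf (Dset h tau) = 1%:E \/
  ereal_inf (Fset h) = +oo%E \/
  (forall Gamma : R, 0 < Gamma -> exists n, Gamma < tau n).

End DoS.

From HB Require Import structures.
From mathcomp Require Import all_boot all_order all_algebra.
From mathcomp Require Import all_classical all_reals all_analysis.
From mathcomp Require Import lra.
Import Order.TTheory GRing.Theory Num.Theory.
Local Open Scope classical_set_scope.
Local Open Scope ring_scope.

(* Write s_n = h_n + tau_n.  A frequency bound forces h_n -> +oo, because
   n + 1 <= n_xi(0, h_n) <= Lambda + B h_n.  If B is a duration bound then
   |Xi(0, s_n)| / s_n <= kappa / s_n + B, and if B is a frequency bound then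
   (n + 1) / h_n <= Lambda / h_n + B; so each limsup is at most the infimum.
   Conversely, if a limsup is below B, the ratio is eventually below B.  Every
   large t lies in some [h_n, h_{n+1}), where Xi(0, t) is contained in
   Xi(0, s_n) and n_xi(0, t) <= n + 1; hence |Xi(0, t)| <= B s_n <= B t + Gamma
   for a bound Gamma of the tau_n, and n_xi(0, t) <= B h_n <= B t, so B is a
   duration (resp. frequency) bound.  For durations the candidates B must also
   be at most 1, which is available since inf D < 1. *)

Section limn_esup_ratio.
Context {R : realType}.
Implicit Types (u : (\bar R)^nat) (l : \bar R) (x s : R^nat).

Lemma limn_esup_le_near u l :
  (\forall n \near \oo, u n <= l)%E -> (limn_esup u <= l)%E.
Proof.
move=> [N _ uNl]; apply: (@le_trans _ _ (ereal_sup (u @` [set n | (N <= n)%N]))).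
  by apply: ereal_inf_lbound; exists [set n | (N <= n)%N] => //; exists N.
by apply: ge_ereal_sup => _ [n /uNl + <-].
Qed.

Lemma limn_esup_lt_near u l :
  (limn_esup u < l)%E -> \forall n \near \oo, (u n < l)%E.
Proof.
move=> /ereal_inf_lt[_ [V oV <-]] supVl; apply: filterS oV => n Vn.
by apply: le_lt_trans supVl; apply: ereal_sup_ubound; exists n.
Qed.

Lemma limn_esup_ratio_le x s (k B : R) : s @ \oo --> +oo ->
  (\forall n \near \oo, x n <= k + B * s n) ->
  (limn_esup (fun n => (x n / s n)%:E) <= B%:E)%E.
Proof.
move=> s_oo x_le; apply/lee_addgt0Pr => e e0; apply: limn_esup_le_near.
near=> n.
have s0 : 0 < s n by near: n; exact: cvgry_gt.
have kes : k < e * s n.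
  by rewrite mulrC -ltr_pdivrMr //; near: n; exact: cvgry_gt.
have : x n <= k + B * s n by near: n; exact: x_le.
rewrite -EFinD lee_fin ler_pdivrMr // mulrDl; lra.
Unshelve. all: by end_near. Qed.

Lemma limn_esup_ratio_lt x s (B : R) : (\forall n \near \oo, 0 < s n) ->
  (limn_esup (fun n => (x n / s n)%:E) < B%:E)%E ->
  \forall n \near \oo, x n < B * s n.
Proof.
move=> s0 /limn_esup_lt_near xsB; near=> n.
rewrite -ltr_pdivrMr; first by rewrite -lte_fin; near: n; exact: xsB.
by near: n; exact: s0.
Unshelve. all: by end_near. Qed.

Lemma ereal_infE_lbound_adherent (S : set (\bar R)) (l : R) : lbound S l%:E ->
  (forall e, 0 < e -> exists2 y, S y & (y <= (l + e)%:E)%E) ->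
  ereal_inf S = l%:E.
Proof.
move=> lS Sl; apply/eqP; rewrite eq_le le_ereal_inf_tmp // andbT.
apply/lee_addgt0Pr => e /Sl[y Sy yle].
exact: le_trans (ereal_inf_lbound Sy) yle.
Qed.

End limn_esup_ratio.

Section DoS_sequence.
Set Implicit Arguments. Unset Strict Implicit.
Context {R : realType} {h tau : nat -> R} (hD : DoS h tau).

Lemma tau_ge0 n : 0 <= tau n.
Proof. by case: hD => _ []. Qed.

Lemma le_h_end n : h n <= h n + tau n.
Proof. by rewrite lerDl tau_ge0. Qed.

Lemma end_lt_next n : h n + tau n < h n.+1.
Proof. by case: hD => _ []. Qed.

Lemma ler_h : {mono h : i j / (i <= j)%N >-> i <= j}.
Proof.
apply: le_mono; apply: Order.NatMonotonyTheory.homo_ltn_lt => n.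
exact: le_lt_trans (le_h_end n) (end_lt_next n).
Qed.

Lemma ltr_h : {mono h : i j / (i < j)%N >-> i < j}.
Proof. exact: leW_mono ler_h. Qed.

Lemma h_ge0 n : 0 <= h n.
Proof. by case: hD => h00 _; rewrite (le_trans h00) // ler_h. Qed.

Lemma end_ge0 n : 0 <= h n + tau n.
Proof. by rewrite addr_ge0 ?h_ge0 ?tau_ge0. Qed.

Lemma le_end : {homo (fun n => h n + tau n) : i j / (i <= j)%N >-> i <= j}.
Proof.
move=> i j; rewrite leq_eqVlt => /predU1P[-> // | ij].
by rewrite ltW // (lt_le_trans (end_lt_next i)) // (le_trans _ (le_h_end j)) // ler_h.
Qed.

Lemma h_bracket t : h @ \oo --> +oo -> h 0 <= t -> exists n, h n <= t < h n.+1.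
Proof.
move=> /cvgry_gt/(_ t)[j _ /(_ j (leqnn j)) /= tj] h0t.
elim: j tj => [|j IHj] tj; first by have := lt_le_trans tj h0t; rewrite ltxx.
by have [/IHj // | jt] := ltP t (h j); exists j; rewrite jt.
Qed.

Lemma measurable_Xi a t : measurable (Xi h tau a t).
Proof.
have -> : Xi h tau a t = \bigcup_n Hset h tau n `&` `[a, t]%classic.
  by congr (_ `&` _); apply/seteqP; split => x /=; rewrite in_itv.
apply: measurableI => //; apply: bigcupT_measurable => n.
apply: measurableU => //.
by rewrite (_ : [set x | _] = `[h n, h n + tau n[%classic).
Qed.

Lemma Xi_sub_end t n : t < h n.+1 -> Xi h tau 0 t `<=` Xi h tau 0 (h n + tau n).
Proof.
move=> tn x [[k _ Hkx] /andP[x0 xt]]; split; first by exists k.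
have [hkx xsk] : h k <= x /\ x <= h k + tau k.
  case: Hkx => [/= ->|/= /andP[hkx /ltW xsk]]; last by [].
  by rewrite lexx le_h_end.
have kn : (k <= n)%N by rewrite -ltnS -ltr_h (le_lt_trans hkx) // (le_lt_trans xt).
by rewrite /= x0 (le_trans xsk) // le_end.
Qed.

Lemma Xi_measure_le t : 0 <= t -> (lebesgue_measure (Xi h tau 0 t) <= t%:E)%E.
Proof.
move=> t0; apply: (@le_trans _ _ (lebesgue_measure (`[0, t]%classic : set R))).
  apply: le_measure; rewrite ?inE; [exact: measurable_Xi|exact: measurable_itv|].
  by move=> x [_]; rewrite /= in_itv.
rewrite lebesgue_measure_itv /= lte_fin; case: ifPn => _; last by rewrite lee_fin.
by rewrite oppr0 adde0.
Qed.

Definition Xi_length t := fine (lebesgue_measure (Xi h tau 0 t)).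

Lemma Xi_lengthE t : 0 <= t -> lebesgue_measure (Xi h tau 0 t) = (Xi_length t)%:E.
Proof.
move=> t0; rewrite fineK // ge0_fin_numE ?measure_ge0 //.
by rewrite (le_lt_trans (Xi_measure_le t0)) ?ltry.
Qed.

Lemma Xi_measure_le_end t n : t < h n.+1 ->
  (lebesgue_measure (Xi h tau 0 t) <= (Xi_length (h n + tau n))%:E)%E.
Proof.
move=> tn; rewrite -Xi_lengthE ?end_ge0 //.
apply: le_measure; rewrite ?inE; [exact: measurable_Xi|exact: measurable_Xi|].
exact: Xi_sub_end.
Qed.

Lemma n_xi_h_ge n : ((n.+1)%:R%:E <= n_xi h 0 (h n))%E.
Proof.
rewrite /n_xi /counting; case: ifPn => [/asboolP fin_xi|_]; last exact: leey.
rewrite lee_fin ler_nat; apply: leq_card_fset_set => //.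
apply: (@card_le_trans _ _ _ (h @` `I_n.+1)).
  have : (`I_n.+1 #= h @` `I_n.+1)%card.
    apply/card_esym/inj_card_eq => i j _ _ hij.
    by apply/eqP; rewrite eqn_leq -!ler_h hij lexx.
  by rewrite card_eq_le => /andP[].
apply: subset_card_le => _ [k /= kn <-]; split; first by exists k.
by rewrite h_ge0 ler_h.
Qed.

Lemma n_xi_le t m : t < h m -> (n_xi h 0 t <= m%:R%:E)%E.
Proof.
move=> tm.
have sub : [set h n | n in [set: nat]] `&` [set x | 0 <= x <= t] `<=` h @` `I_m.
  by move=> _ [[k _ <-] /andP[_ kt]]; exists k; rewrite //= -ltr_h (le_lt_trans kt).
have fin_xi := sub_finite_set sub (finite_image h (finite_II m)).
rewrite /n_xi /counting asboolT // lee_fin ler_nat; apply: geq_card_fset_set.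
exact: card_le_trans (subset_card_le sub) (card_image_le h `I_m).
Qed.

Lemma freq_bound_cvgy B : is_freq_bound h B -> h @ \oo --> +oo.
Proof.
move=> [B0 [L [_ HL]]]; apply/cvgryPgt => K.
have [n Ln] : exists n : nat, L%:R + B * K < n%:R.
  by exists (Num.truncn (L%:R + B * K)).+1; exact: truncnS_gt.
have Khn : K < h n.
  rewrite ltNge; apply/negP => hnK.
  have := le_trans (n_xi_h_ge n) (HL _ (h_ge0 n)); rewrite lee_fin.
  have := ler_wpM2l B0 hnK; have : (n%:R : R) <= n.+1%:R by rewrite ler_nat.
  lra.
by exists n => // m /= nm; rewrite (lt_le_trans Khn) // ler_h.
Qed.

Lemma duration_bound1 : is_duration_bound h tau 1.
Proof.
split; first by rewrite ler01 lexx.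
exists 1; split => // t t0; rewrite (le_trans (Xi_measure_le t0)) // lee_fin.
by rewrite mul1r lerDr.
Qed.

Lemma duration_bound_limn_esup_le B : h @ \oo --> +oo -> is_duration_bound h tau B ->
  (limn_esup (fun n => (Xi_length (h n + tau n) / (h n + tau n))%:E) <= B%:E)%E.
Proof.
move=> h_oo [_ [k [_ Hk]]]; apply: (@limn_esup_ratio_le _ _ _ k).
  by apply: ger_cvgy h_oo; apply: nearW; exact: le_h_end.
by apply: nearW => n; rewrite -lee_fin -Xi_lengthE ?Hk ?end_ge0.
Qed.

(* The constant kappa = h N + G + 1 also covers t < h N, where
   |Xi(0, t)| <= t is enough. *)
Lemma duration_bound_near B G : 0 <= B <= 1 -> (forall n, tau n <= G) ->
  h @ \oo --> +oo ->
  (\forall n \near \oo, Xi_length (h n + tau n) < B * (h n + tau n)) ->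
  is_duration_bound h tau B.
Proof.
move=> B01 tauG h_oo [N _ HN]; split => //.
have G0 : 0 <= G := le_trans (tau_ge0 0) (tauG 0).
have [B0 B1] := andP B01.
exists (h N + G + 1); split => [|t t0]; first by have := h_ge0 N; lra.
have [tN|Nt] := ltP t (h N).
  rewrite (le_trans (Xi_measure_le t0)) // lee_fin.
  by have := h_ge0 N; have := mulr_ge0 B0 t0; lra.
have [n /andP[hnt tn]] : exists n, h n <= t < h n.+1.
  by apply: h_bracket h_oo (le_trans _ Nt); rewrite ler_h.
have Nn : (N <= n)%N by rewrite -ltnS -ltr_h (le_lt_trans Nt).
rewrite (le_trans (Xi_measure_le_end tn)) // lee_fin.
have := HN n Nn; have := ler_wpM2l B0 hnt; have := ler_wpM2r (tau_ge0 n) B1.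
have := tauG n; have := h_ge0 N; rewrite mulrDr mul1r; lra.
Qed.

Lemma freq_bound_limn_esup_le B : is_freq_bound h B ->
  (limn_esup (fun n => ((n.+1)%:R / h n)%:E) <= B%:E)%E.
Proof.
move=> fB; have [_ [L [_ HL]]] := fB.
apply: (@limn_esup_ratio_le _ _ _ L%:R); first exact: freq_bound_cvgy fB.
by apply: nearW => n; rewrite -lee_fin (le_trans (n_xi_h_ge n)) ?HL ?h_ge0.
Qed.

Lemma freq_bound_near B : 0 <= B -> h @ \oo --> +oo ->
  (\forall n \near \oo, (n.+1)%:R < B * h n) -> is_freq_bound h B.
Proof.
move=> B0 h_oo [N _ HN]; split => //; exists N.+1; split => // t t0.
have [tN|Nt] := ltP t (h N.+1).
  by rewrite (le_trans (n_xi_le tN)) // lee_fin lerDl mulr_ge0.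
have [n /andP[hnt tn]] : exists n, h n <= t < h n.+1.
  by apply: h_bracket h_oo (le_trans _ Nt); rewrite ler_h.
have Nn : (N < n)%N by rewrite -ltnS -ltr_h (le_lt_trans Nt).
rewrite (le_trans (n_xi_le tn)) // lee_fin.
have := HN n (ltnW Nn); have := ler_wpM2l B0 hnt.
have : (n.+1%:R : R) <= N.+1%:R + n.+1%:R by rewrite lerDr.
lra.
Qed.

Lemma limn_esup_duration_ratioE G : (forall n, tau n <= G) -> h @ \oo --> +oo ->
  ereal_inf (Dset h tau) != 1%:E ->
  limn_esup (fun n => (lebesgue_measure (Xi h tau 0 (h n + tau n))
                         * ((h n + tau n)^-1)%:E)%E) = ereal_inf (Dset h tau).
Proof.
move=> tauG h_oo D_neq1.
under eq_fun => n do rewrite Xi_lengthE ?end_ge0 // -EFinM.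
set L := limn_esup _.
have LD : lbound (Dset h tau) L.
  by move=> _ [B [-> DB]]; exact: duration_bound_limn_esup_le.
have L0 : (0 <= L)%E.
  apply: limf_esup_ge0 => [|n]; first exact: filter_not_empty.
  by rewrite lee_fin divr_ge0 ?end_ge0 ?fine_ge0 ?measure_ge0.
have L1 : (L < 1%:E)%E.
  rewrite (le_lt_trans (le_ereal_inf_tmp LD)) // lt_neqAle D_neq1 /=.
  by apply: ereal_inf_lbound; exists 1; split => //; exact: duration_bound1.
have Lfin : L = (fine L)%:E by rewrite fineK // ge0_fin_numE // (lt_trans L1) ?ltry.
have L0r : 0 <= fine L by rewrite fine_ge0.
have L1r : fine L < 1 by rewrite -lte_fin -Lfin.
rewrite Lfin; apply/esym/ereal_infE_lbound_adherent; first by rewrite -Lfin.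
move=> e e0; exists (Num.min (fine L + e) 1)%:E; last by rewrite lee_fin ge_min lexx.
exists (Num.min (fine L + e) 1); split => //.
apply: (@duration_bound_near _ G) => //.
  by rewrite le_min ge_min lexx orbT andbT; apply/andP; split => //; lra.
apply: limn_esup_ratio_lt.
  by apply: filterS (cvgry_gt h_oo 0) => n /lt_le_trans; apply; exact: le_h_end.
by rewrite -/L Lfin lte_fin lt_min L1r andbT ltrDl.
Qed.

Lemma limn_esup_freq_ratioE Bf : is_freq_bound h Bf ->
  limn_esup (fun n => ((n.+1)%:R / h n)%:E) = ereal_inf (Fset h).
Proof.
move=> fBf; set M := limn_esup _.
have MF : lbound (Fset h) M.
  by move=> _ [[B [-> fB]] | [-> _]]; [exact: freq_bound_limn_esup_le | exact: leey].
have M0 : (0 <= M)%E.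
  apply: limf_esup_ge0 => [|n]; first exact: filter_not_empty.
  by rewrite lee_fin divr_ge0 ?h_ge0.
have Mfin : M = (fine M)%:E.
  rewrite fineK // ge0_fin_numE //.
  exact: le_lt_trans (freq_bound_limn_esup_le fBf) (ltry Bf).
rewrite Mfin; apply/esym/ereal_infE_lbound_adherent => [|e e0]; first by rewrite -Mfin.
exists (fine M + e)%:E => //; left; exists (fine M + e); split => //.
apply: freq_bound_near; first by rewrite addr_ge0 ?fine_ge0 // ltW.
  exact: freq_bound_cvgy fBf.
apply: limn_esup_ratio_lt; first exact: cvgry_gt (freq_bound_cvgy fBf) 0.
by rewrite -/M Mfin lte_fin ltrDl.
Qed.

End DoS_sequence.

Theorem lemma2 (R : realType) (h tau : nat -> R) :
  DoS h tau -> ~ edge_case h tau ->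
  limn_esup (fun n => (lebesgue_measure (Xi h tau 0 (h n + tau n))
                         * ((h n + tau n)^-1)%:E)%E) = ereal_inf (Dset h tau)
  /\ limn_esup (fun n => ((n.+1)%:R / h n)%:E) = ereal_inf (Fset h).
Proof.
move=> hD not_edge.
have [G tauG] : exists G, forall n, tau n <= G.
  apply: contrapT => tau_unbounded; apply: not_edge; right; right => G G0.
  apply: contrapT => /forallNP tauG; apply: tau_unbounded; exists G => n.
  by rewrite leNgt; apply/negP => /tauG.
have [Bf fBf] : exists B, is_freq_bound h B.
  apply: contrapT => no_freq; apply: not_edge; right; left.
  apply/eqP; rewrite -leye_eq; apply: le_ereal_inf_tmp => x [[B [_ fB]] | [-> _]] //.
  by case: no_freq; exists B.
split; last exact: (limn_esup_freq_ratioE hD fBf).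
apply: (limn_esup_duration_ratioE hD tauG (freq_bound_cvgy hD fBf)).
by apply/eqP => D1; apply: not_edge; left.
Qed.
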